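(* Let $W$ be a finite set, $\mathtt{N}=\{N_1,\ldots,N_r\}$ a sequence of subsets of $W$, and $K(\mathtt{N})$ the associated simplicial complex. Then $K(\mathtt{N})$ has a minimal Taylor resolution.
   Context: The sequence $\mathtt{N}$ may contain repetitions ($N_i=N_j$ for $i\ne j$ allowed). Choose distinct new points $a_1,\ldots,a_r\notin W$, put $\widetilde{N}_i=N_i\sqcup\{a_i\}$ and $V=W\sqcup\{a_1,\ldots,a_r\}$. $K(\mathtt{N})$ is the simplicial complex on vertex set $V$ whose minimal non-faces are exactly $\widetilde{N}_1,\ldots,\widetilde{N}_r$ (its faces are the subsets of $V$ containing no $\widetilde{N}_i$). A minimal non-face of a simplicial complex $K$ is a non-empty vertex subset $N\notin K$ with $N-\{i\}\in K$ for all $i\in N$. If $N_1,\ldots,N_r$ are the minimal non-faces of $K$, the Taylor resolution of the Stanley–Reisner ring $\Bbbk[K]=\Bbbk[v_1,\ldots,v_m]/(v_I\mid I\notin K)$ is the free resolution with degree $-\ell$ term free on $w_{i_1,\ldots,i_\ell}$, $1\le i_1<\cdots<i_\ell\le r$, and differential $d(w_{i_1,\ldots,i_\ell})=\sum_{k}(-1)^{k+1}v_{(N_{i_1}\cup\cdots\cup N_{i_\ell})-(N_{i_1}\cup\cdots\widehat{N_{i_k}}\cdots\cup N_{i_\ell})}w_{i_1,\ldots,\widehat{i_k},\ldots,i_\ell}$ ($v_S=\prod_{s\in S}v_s$, $v_\emptyset=1$). $K$ has a minimal Taylor resolution if $d\otimes_{\Bbbk[v_1,\ldots,v_m]}\Bbbk=0$;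 this is independent of $\Bbbk$ and equivalent to $N_i\not\subset\bigcup_{k\ne i}N_k$ for all $i$. *)

From HB Require Import structures.
From mathcomp Require Import all_boot all_order all_algebra.
Set Implicit Arguments. Unset Strict Implicit. Unset Printing Implicit Defensive.
Import GRing.Theory.
Local Open Scope ring_scope.

(* A simplicial complex on a finite vertex type V is represented by its set of
   faces, a set of subsets of V. *)

(* The complex K(N): vertex set V = W + 'I_r, where inr i is the new point a_i;
   tilde N_i = N_i ⊔ {a_i}; faces = subsets containing no tilde N_i. *)
Definition tildeN (W : finType) (r : nat) (N : 'I_r -> {set W}) (i : 'I_r)
  : {set (W + 'I_r)%type} := (inl @: N i) :|: [set inr i].

Definition KN (W : finType) (r : nat) (N : 'I_r -> {set W})
  : {set {set (W + 'I_r)%type}} :=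
  [set F : {set (W + 'I_r)%type} | [forall i : 'I_r, ~~ (tildeN N i \subset F)]].

Definition is_min_nonface (V : finType) (K : {set {set V}}) (A : {set V}) : bool :=
  [&& A != set0, A \notin K & [forall x in A, (A :\ x) \in K]].

Definition min_nonfaces (V : finType) (K : {set {set V}}) : {set {set V}} :=
  [set A | is_min_nonface K A].

Definition mnf_list (V : finType) (K : {set {set V}}) (i : 'I_#|min_nonfaces K|)
  : {set V} := enum_val i.

(* Image in the field k (i.e. after - ⊗_{k[v]} k, where every v_s ↦ 0) of the
   monomial v_S: it is 1 if S is empty and 0 otherwise. *)
Definition monomial_mod (k : fieldType) (V : finType) (S : {set V}) : k :=
  if S == set0 then 1 else 0.

(* Coefficient of w_{I - i} in d(w_I) in the Taylor resolution, tensored with k.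
   The sign is (-1)^(p+1) where p is the (1-based) position of i in I, i.e.
   (-1)^#|{j in I | j < i}|. *)
Definition taylor_coef (k : fieldType) (V : finType) (K : {set {set V}})
  (I : {set 'I_#|min_nonfaces K|}) (i : 'I_#|min_nonfaces K|) : k :=
  (-1) ^+ #|[set j in I | (j < i)%N]| *
  monomial_mod k ((\bigcup_(j in I) mnf_list j) :\: (\bigcup_(j in I :\ i) mnf_list j)).

(* The differential d ⊗ k of the Taylor resolution, on the k-vector space with
   basis w_I (I ranging over subsets of indices), coordinates as finite functions. *)
Definition taylor_d_tensor (k : fieldType) (V : finType) (K : {set {set V}})
  (x : {ffun {set 'I_#|min_nonfaces K|} -> k}) : {ffun {set 'I_#|min_nonfaces K|} -> k} :=
  [ffun J => \sum_(I : {set 'I_#|min_nonfaces K|})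
               \sum_(i in I | I :\ i == J) taylor_coef k I i * x I].

Definition has_minimal_taylor (k : fieldType) (V : finType) (K : {set {set V}}) : Prop :=
  forall x : {ffun {set 'I_#|min_nonfaces K|} -> k}, taylor_d_tensor x = 0.

(* Every minimal non-face of K(N) is some tilde N_a, and the added vertex a_a lies
   in tilde N_a and in no other minimal non-face.  Hence the monomial coefficient of
   every term of the Taylor differential contains that private vertex, so it
   vanishes modulo the variables. *)
From mathcomp Require Import all_boot all_order all_algebra.
Import GRing.Theory.
Set Implicit Arguments. Unset Strict Implicit. Unset Printing Implicit Defensive.
Local Open Scope ring_scope.

Section PrivateVertex.

Variables (k : fieldType) (V : finType) (K : {set {set V}}).

Definition private_vertex (i : 'I_#|min_nonfaces K|) (v : V) : bool :=
  (v \in mnf_list i) && [forall j, (j != i) ==> (v \notin mnf_list j)].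

Lemma taylor_coef_private {I : {set 'I_#|min_nonfaces K|}} {i v} :
  i \in I -> private_vertex i v -> taylor_coef k I i = 0.
Proof.
move=> iI /andP [v_i /forallP v_priv].
rewrite /taylor_coef /monomial_mod; case: eqP => [E|_]; last by rewrite mulr0.
suff : v \in (set0 : {set V}) by rewrite in_set0.
rewrite -E in_setD; apply/andP; split; last by apply/bigcupP; exists i.
apply/bigcupP => -[j]; rewrite in_setD1 => /andP [ji _].
by move: (v_priv j); rewrite ji /= => /negPf ->.
Qed.

Lemma has_minimal_taylor_private :
  (forall i, exists v, private_vertex i v) -> has_minimal_taylor k K.
Proof.
move=> priv x; apply/ffunP => J; rewrite !ffunE.
apply: big1 => I _; apply: big1 => i /andP [iI _].
have [v iv] := priv i.
by rewrite (taylor_coef_private iI iv) mul0r.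
Qed.

End PrivateVertex.

Arguments private_vertex {V} K i v.

Section MinimalNonfacesKN.

Variables (W : finType) (r : nat) (N : 'I_r -> {set W}).

Lemma inr_in_tildeN a b : (inr b \in tildeN N a) = (b == a).
Proof.
rewrite /tildeN in_setU in_set1 inj_eq; last exact: inr_inj.
by have /negbTE -> : inr b \notin inl @: N a by apply/imsetP => -[].
Qed.

Lemma min_nonface_KN A :
  A \in min_nonfaces (KN N) -> exists a, A = tildeN N a.
Proof.
rewrite inE => /and3P [_ AnK /forallP A_min].
move: AnK; rewrite inE negb_forall => /existsP [a]; rewrite negbK => sub.
exists a; apply/eqP; rewrite eqEsubset sub andbT.
apply/subsetP => x xA; apply/negPn/negP => xn.
have := A_min x; rewrite xA inE => /forallP /(_ a).
by rewrite subsetD1 sub xn.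
Qed.

Lemma KN_private_vertex i : exists v, private_vertex (KN N) i (inr v).
Proof.
have [a Ha] := min_nonface_KN (enum_valP i).
exists a; rewrite /private_vertex /mnf_list Ha inr_in_tildeN eqxx /=.
apply/forallP => j; apply/implyP => ji.
have [b Hb] := min_nonface_KN (enum_valP j).
rewrite Hb inr_in_tildeN; apply: contra ji => /eqP ab.
by apply/eqP/enum_val_inj; rewrite Ha Hb ab.
Qed.

End MinimalNonfacesKN.

Theorem corollary2p2 (W : finType) (r : nat) (N : 'I_r -> {set W})
  (k : fieldType) : has_minimal_taylor k (KN N).
Proof.
apply: has_minimal_taylor_private => i.
have [a ia] := KN_private_vertex i.
by exists (inr a).
Qed.
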